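(* The weighted transverse map $\tau:\mathfrak{V}_n\to\mathfrak{W}_n$ satisfies: (i) for all $A\in\mathrm{GL}(n,\mathbb{Z})$ and $V\in\mathfrak{V}_n$, $\tau(A\cdot V)=A^*\cdot\tau(V)$, where $A^*=(A^{-1})^T$; (ii) for all $\sigma\in\mathfrak{S}_{n+1}$ and $V\in\mathfrak{V}_n$, $\tau(\sigma(V))=\tau(V)\ast\sigma$.
   Context: For $V=(\mathbf{v}_0,\ldots,\mathbf{v}_n)\in\mathrm{Mat}(n,n+1;\mathbb{Z})$ (columns indexed $0,\ldots,n$), $V_j$ is the determinant of $V$ with column $\mathbf{v}_j$ deleted and $V^0=(\mathbf{v}_1,\ldots,\mathbf{v}_n)$. $\mathfrak{V}_n$ is the set of F-admissible matrices: all $V_j\ne0$, $\gcd(V_0,\ldots,V_n)=1$, $\sum_j|V_j|\mathbf{v}_j=0$. $\tau(V)=((V^0)^{-1})^T\cdot\mathrm{lcm}(|V_0|,\ldots,|V_n|)\,\mathrm{diag}(1/|V_1|,\ldots,1/|V_n|)$, and $\mathfrak{W}_n=\tau(\mathfrak{V}_n)$. The permutation group $\mathfrak{S}_{n+1}$ of $\{0,\ldots,n\}$ acts on $\mathfrak{V}_n$ by $\sigma(V)=(\mathbf{v}_{\sigma(0)},\ldots,\mathbf{v}_{\sigma(n)})$ (right multiplication by the permutation matrix), and on $\mathfrak{W}_n$ by: for $W=(\mathbf{w}_1,\ldots,\mathbf{w}_n)$ and $\mathbf{w}_0:=\mathbf{0}$, $W\ast\sigma=(\mathbf{w}_{\sigma(1)}-\mathbf{w}_{\sigma(0)},\ldots,\mathbf{w}_{\sigma(n)}-\mathbf{w}_{\sigma(0)})$.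 *)

From HB Require Import structures.
From mathcomp Require Import all_boot all_order all_algebra all_fingroup.
Set Implicit Arguments. Unset Strict Implicit. Unset Printing Implicit Defensive.
Import Order.TTheory GRing.Theory Num.Theory.
Local Open Scope ring_scope.

(* Integer n x (n+1) matrices V = (v_0, ..., v_n); columns indexed by 'I_(n.+1). *)

Definition Vminor (n : nat) (V : 'M[int]_(n, n.+1)) (j : 'I_n.+1) : int :=
  \det (col' j V).

Definition V0mat (n : nat) (V : 'M[int]_(n, n.+1)) : 'M[int]_n := col' ord0 V.

Definition F_admissible (n : nat) (V : 'M[int]_(n, n.+1)) : Prop :=
  [/\ (forall j, Vminor V j != 0),
      (\big[gcdn/0%N]_(j < n.+1) `|Vminor V j|%N = 1%N) &
      \sum_(j < n.+1) `|Vminor V j| *: col j V = 0].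

Definition intmx (m k : nat) (M : 'M[int]_(m, k)) : 'M[rat]_(m, k) :=
  map_mx (fun z : int => z%:~R) M.

Definition lcmV (n : nat) (V : 'M[int]_(n, n.+1)) : nat :=
  \big[lcmn/1%N]_(j < n.+1) `|Vminor V j|%N.

Definition tau (n : nat) (V : 'M[int]_(n, n.+1)) : 'M[rat]_n :=
  (invmx (intmx (V0mat V)))^T *m
    diag_mx (\row_(i < n) ((lcmV V)%:R / (`|Vminor V (lift ord0 i)|%:R))).

Definition perm_act (n : nat) (s : 'S_n.+1) (V : 'M[int]_(n, n.+1))
  : 'M[int]_(n, n.+1) := col_perm s V.

Definition wcol (n : nat) (W : 'M[rat]_n) (j : 'I_n.+1) : 'cV[rat]_n :=
  match unlift ord0 j with Some i => col i W | None => 0 end.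

Definition star_act (n : nat) (W : 'M[rat]_n) (s : 'S_n.+1) : 'M[rat]_n :=
  \matrix_(r < n, k < n)
    (wcol W (s (lift ord0 k)) r 0 - wcol W (s ord0) r 0).

From HB Require Import structures.
From mathcomp Require Import all_boot all_order all_algebra all_fingroup.
Set Implicit Arguments. Unset Strict Implicit. Unset Printing Implicit Defensive.
Import GRing.Theory Num.Theory.
Local Open Scope ring_scope.

(* Write c_j := lcm(|V_0|, ..., |V_n|) / |V_j| and w_0 := 0.  By definition
   W = tau(V) is the unique rational matrix with v_a . w_b = c_a [a = b] for
   a, b >= 1.  Pairing the relation sum_j |V_j| v_j = 0 with w_b extends this
   to v_a . w_b = c_b [a = b] - c_0 [a = 0] for all a, b in {0, ..., n}.
   Both actions preserve the |V_j| up to reindexing (the minors of A V are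
   det A * V_j with det A = +-1, and those of sigma(V) are +-V_sigma(j)), hence
   the weights c_j; (i) is then the uniqueness of W under V^0 |-> A V^0, and
   (ii) follows by checking the pairing identity against the columns of
   sigma(V). *)

Lemma det_intmx n (M : 'M[int]_n) : \det (intmx M) = (\det M)%:~R.
Proof. by rewrite /intmx (det_map_mx intr). Qed.

Lemma intmxM m k p (A : 'M[int]_(m, k)) (B : 'M[int]_(k, p)) :
  intmx (A *m B) = intmx A *m intmx B.
Proof. by rewrite /intmx (map_mxM intr). Qed.

Lemma intmx_unitmx n (M : 'M[int]_n) : (intmx M \in unitmx) = (\det M != 0).
Proof. by rewrite unitmxE det_intmx unitfE intr_eq0. Qed.

Lemma absz_unit (x : int) : x \is a GRing.unit -> `|x|%N = 1%N.
Proof. by case/orP => /eqP ->. Qed.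

Lemma col'_mulmx m k n (A : 'M[int]_(m, k)) (V : 'M[int]_(k, n)) j :
  col' j (A *m V) = A *m col' j V.
Proof.
by apply/matrixP => r c; rewrite !mxE; apply: eq_bigr => l _; rewrite mxE.
Qed.

Lemma col'_col_perm n (s : 'S_n.+1) (j : 'I_n.+1) :
  exists p : 'S_n, forall m (A : 'M[int]_(m, n.+1)),
    col' j (col_perm s A) = col_perm p (col' (s j) A).
Proof.
pose f k := odflt k (unlift (s j) (s (lift j k))).
have liftf k : lift (s j) (f k) = s (lift j k).
  by rewrite /f; case: unliftP => //= /perm_inj /eqP; rewrite lift_eqF.
have inj_f : injective f.
  move=> k1 k2 eq_f; apply: (@lift_inj _ j); apply: (@perm_inj _ s).
  by rewrite -!liftf eq_f.
by exists (perm inj_f) => m A; apply/matrixP => r k; rewrite !mxE permE liftf.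
Qed.

Lemma absVminor_mulmx n (A : 'M[int]_n) (V : 'M[int]_(n, n.+1)) j :
  A \in unitmx -> `|Vminor (A *m V) j|%N = `|Vminor V j|%N.
Proof.
rewrite unitmxE => /absz_unit uA.
by rewrite /Vminor col'_mulmx det_mulmx abszM uA mul1n.
Qed.

Lemma absVminor_perm n (s : 'S_n.+1) (V : 'M[int]_(n, n.+1)) j :
  `|Vminor (perm_act s V) j|%N = `|Vminor V (s j)|%N.
Proof.
rewrite /Vminor /perm_act; have [p ->] := col'_col_perm s j.
by rewrite col_permE det_mulmx det_perm mulrC abszMsign.
Qed.

Definition weight n (V : 'M[int]_(n, n.+1)) (j : 'I_n.+1) : rat :=
  (lcmV V)%:R / (`|Vminor V j|%:R).

Lemma weight_perm n (s : 'S_n.+1) (V V' : 'M[int]_(n, n.+1)) :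
  (forall j, `|Vminor V' j|%N = `|Vminor V (s j)|%N) ->
  forall j, weight V' j = weight V (s j).
Proof.
move=> eqV' j; rewrite /weight eqV'; congr (_%:R / _).
rewrite /lcmV (eq_bigr _ (fun j _ => eqV' j)).
by rewrite [RHS](reindex_inj (@perm_inj _ s)).
Qed.

Lemma weight_absVminor n (V : 'M[int]_(n, n.+1)) j :
  Vminor V j != 0 -> (`|Vminor V j|%N)%:R * weight V j = (lcmV V)%:R.
Proof. by move=> nzVj; rewrite mulrC divfK // pnatr_eq0 absz_eq0. Qed.

Section TauDuality.

Variables (n : nat) (V : 'M[int]_(n, n.+1)).
Hypothesis nzV0 : Vminor V ord0 != 0.

Lemma V0mat_unitmx : intmx (V0mat V) \in unitmx.
Proof. by rewrite intmx_unitmx. Qed.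

Lemma trmx_V0mat_mul_tau :
  (intmx (V0mat V))^T *m tau V = diag_mx (\row_i weight V (lift ord0 i)).
Proof. by rewrite /tau trmx_inv mulKVmx // unitmx_tr V0mat_unitmx. Qed.

Lemma tau_unique (W : 'M[rat]_n) :
  (intmx (V0mat V))^T *m W = diag_mx (\row_i weight V (lift ord0 i)) ->
  tau V = W.
Proof.
move=> defW; rewrite /tau trmx_inv -defW mulKmx //.
by rewrite unitmx_tr V0mat_unitmx.
Qed.

Lemma tau_pairing_lift (i : 'I_n) b :
  \sum_r (V r (lift ord0 i))%:~R * wcol (tau V) b r 0 =
    (lift ord0 i == b)%:R * weight V b.
Proof.
rewrite /wcol; case: unliftP => [k ->|->]; last first.
  by rewrite lift_eqF mul0r big1 // => r _; rewrite mxE mulr0.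
rewrite (inj_eq lift_inj).
transitivity (((intmx (V0mat V))^T *m tau V) i k).
  by rewrite !mxE; apply: eq_bigr => r _; rewrite !mxE.
by rewrite trmx_V0mat_mul_tau !mxE; case: eqP => [->|]; rewrite ?mul1r ?mul0r.
Qed.

End TauDuality.

Lemma relation_pairing_eq0 n (V : 'M[int]_(n, n.+1)) (x : 'I_n -> rat) :
  \sum_(j < n.+1) `|Vminor V j| *: col j V = 0 ->
  \sum_j (`|Vminor V j|%N)%:R * \sum_r (V r j)%:~R * x r = 0.
Proof.
move=> rel; under eq_bigr do rewrite mulr_sumr.
rewrite exchange_big /=; apply: big1 => r _.
have := congr1 (fun M : 'cV[int]_n => (M r 0)%:~R * x r) rel.
rewrite summxE mxE rmorph0 mul0r rmorph_sum mulr_suml /= => eq0.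
rewrite -[RHS]eq0.
by apply: eq_bigr => j _; rewrite !mxE intrM -abszE mulrA.
Qed.

Lemma tau_pairing n (V : 'M[int]_(n, n.+1)) (a b : 'I_n.+1) :
  F_admissible V ->
  \sum_r (V r a)%:~R * wcol (tau V) b r 0 =
    (a == b)%:R * weight V b - (a == ord0)%:R * weight V ord0.
Proof.
move=> [nzV _ rel].
case: (unliftP ord0 a) => [i ->|->].
  by rewrite tau_pairing_lift // lift_eqF mul0r subr0.
apply: (mulfI (_ : (`|Vminor V ord0|%N)%:R != 0)).
  by rewrite pnatr_eq0 absz_eq0.
have := relation_pairing_eq0 (fun r => wcol (tau V) b r 0) rel.
rewrite big_ord_recl => /eqP; rewrite addr_eq0 => /eqP ->.
under eq_bigr do rewrite tau_pairing_lift // mulrA.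
case: (unliftP ord0 b) => [k ->|->]; last first.
  rewrite eqxx mul1r subrr mulr0 big1 ?oppr0 // => i _.
  by rewrite lift_eqF mulr0 mul0r.
rewrite eq_liftF mul0r eqxx mul1r sub0r mulrN (bigD1 k) //= eqxx mulr1.
rewrite big1 ?addr0 => [|i /negbTE neq_ik]; last first.
  by rewrite (inj_eq lift_inj) neq_ik mulr0 mul0r.
by rewrite !weight_absVminor.
Qed.

Lemma tau_mulmx n (A : 'M[int]_n) (V : 'M[int]_(n, n.+1)) :
  A \in unitmx -> F_admissible V ->
  tau (A *m V) = (invmx (intmx A))^T *m tau V.
Proof.
move=> uA [nzV _ _].
have nzAV0 : Vminor (A *m V) ord0 != 0.
  by rewrite -absz_eq0 absVminor_mulmx // absz_eq0.
have uA' : intmx A \in unitmx.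
  by rewrite intmx_unitmx -absz_eq0 absz_unit // -unitmxE.
apply: tau_unique => //.
have weight_AV j : weight (A *m V) j = weight V j.
  by rewrite (@weight_perm _ 1 V) ?perm1 // => i; rewrite perm1 absVminor_mulmx.
under eq_mx do rewrite weight_AV.
rewrite /V0mat col'_mulmx intmxM trmx_mul -!mulmxA (mulmxA (intmx A)^T).
by rewrite -trmx_mul mulVmx // trmx1 mul1mx trmx_V0mat_mul_tau.
Qed.

Lemma tau_perm_act n (s : 'S_n.+1) (V : 'M[int]_(n, n.+1)) :
  F_admissible V -> tau (perm_act s V) = star_act (tau V) s.
Proof.
move=> admV; have [nzV _ _] := admV.
have weight_s := weight_perm (absVminor_perm s V).
apply: tau_unique; first by rewrite -absz_eq0 absVminor_perm absz_eq0.
apply/matrixP => j k; rewrite !mxE.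
transitivity (\sum_r (V r (s (lift ord0 j)))%:~R *
   (wcol (tau V) (s (lift ord0 k)) r 0 - wcol (tau V) (s ord0) r 0)).
  by apply: eq_bigr => r _; rewrite !mxE.
under eq_bigr do rewrite mulrBr.
rewrite sumrB !tau_pairing // !(inj_eq (@perm_inj _ s)) (inj_eq lift_inj).
rewrite lift_eqF mul0r sub0r opprK subrK weight_s.
by case: eqP => [->|_]; rewrite ?mul1r ?mul0r.
Qed.

Theorem mainTheorem15 (n : nat) :
  (forall (A : 'M[int]_n) (V : 'M[int]_(n, n.+1)),
      A \in unitmx -> F_admissible V ->
      tau (A *m V) = (invmx (intmx A))^T *m tau V) /\
  (forall (s : 'S_n.+1) (V : 'M[int]_(n, n.+1)),
      F_admissible V ->
      tau (perm_act s V) = star_act (tau V) s).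
Proof. by split; [exact: tau_mulmx | exact: tau_perm_act]. Qed.
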